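(* Let $S=(\mathrm{Id}_n+W_dV_d)\cdots(\mathrm{Id}_n+W_1V_1)Z$ and, for $\eta\in\mathbb C$, $Z_\eta=Z+\eta S$. Then for all $\mu,\eta\in\mathbb C$ and all $k,l\in\mathbb N$, $\{\operatorname{tr}Z_\mu^k,\operatorname{tr}Z_\eta^l\}=0$ on $\mathcal C^\times_{n,d,q}$.
   Context: Fix integers $n\ge1$, $d\ge1$ and $q\in\mathbb C^\times$ not a root of unity. Greek indices range over $\{1,\dots,d\}$; set $o(\alpha,\beta)=0$ if $\alpha=\beta$, $o(\alpha,\beta)=1$ if $\alpha<\beta$, $o(\alpha,\beta)=-1$ if $\alpha>\beta$. Let $\mathcal M^\times_{n,d,q}$ be the affine variety of tuples $(X,Z,V_1,\dots,V_d,W_1,\dots,W_d)$ with $X,Z\in\mathrm{GL}_n(\mathbb C)$, $V_\alpha\in\mathrm{Mat}_{1\times n}(\mathbb C)$, $W_\alpha\in\mathrm{Mat}_{n\times 1}(\mathbb C)$, such that every $\mathrm{Id}_n+W_\alpha V_\alpha$ is invertible and $XZX^{-1}Z^{-1}(\mathrm{Id}_n+W_1V_1)^{-1}\cdots(\mathrm{Id}_n+W_dV_d)^{-1}=q\,\mathrm{Id}_n$. $\mathrm{GL}_n$ acts by $g\cdot(X,Z,V_\alpha,W_\alpha)=(gXg^{-1},gZg^{-1},V_\alpha g^{-1},gW_\alpha)$; the action is free and $\mathcal C^\times_{n,d,q}=\mathcal M^\times_{n,d,q}/\!/\mathrm{GL}_n$ is a smooth affine variety of dimension $2nd$ with $\mathbb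 C[\mathcal C^\times_{n,d,q}]=\mathbb C[\mathcal M^\times_{n,d,q}]^{\mathrm{GL}_n}$. Write $V_{\alpha,j}$, $W_{\alpha,k}$ for the entries. Let $\{-,-\}$ be the antisymmetric biderivation on functions of $(X,Z,V_\alpha,W_\alpha)$ (Van den Bergh's quasi-Poisson bracket) given by $\{X_{ij},X_{kl}\}=\tfrac12(\delta_{il}(X^2)_{kj}-\delta_{kj}(X^2)_{il})$, $\{Z_{ij},Z_{kl}\}=\tfrac12(\delta_{kj}(Z^2)_{il}-\delta_{il}(Z^2)_{kj})$, $\{X_{ij},Z_{kl}\}=\tfrac12((ZX)_{kj}\delta_{il}+\delta_{kj}(XZ)_{il}+Z_{kj}X_{il}-X_{kj}Z_{il})$, $\{U_{ij},W_{\alpha,k}\}=\tfrac12(\delta_{kj}(UW_\alpha)_i-U_{kj}W_{\alpha,i})$, $\{U_{ij},V_{\alpha,l}\}=\tfrac12((V_\alpha U)_j\delta_{il}-V_{\alpha,j}U_{il})$ for $U\in\{X,Z\}$, $\{V_{\alpha,j},V_{\beta,l}\}=\tfrac12 o(\beta,\alpha)(V_{\beta,j}V_{\alpha,l}+V_{\alpha,j}V_{\beta,l})$, $\{W_{\alpha,i},W_{\beta,k}\}=\tfrac12 o(\beta,\alpha)(W_{\beta,k}W_{\alpha,i}+W_{\alpha,k}W_{\beta,i})$, $\{V_{\alpha,j},W_{\beta,k}\}=\delta_{\alpha\beta}(\delta_{kj}+\tfrac12W_{\alpha,k}V_{\alpha,j}+\tfrac12\delta_{kj}V_\alpha W_\alpha)+\tfrac12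 o(\alpha,\beta)(\delta_{kj}V_\alpha W_\beta+W_{\beta,k}V_{\alpha,j})$. Restricted to $\mathrm{GL}_n$-invariant functions this bracket induces a non-degenerate Poisson bracket on $\mathcal C^\times_{n,d,q}$ (quasi-Hamiltonian reduction); this is the Poisson bracket $\{-,-\}$ on $\mathcal C^\times_{n,d,q}$. *)

From HB Require Import structures.
From mathcomp Require Import all_boot all_order all_algebra.
Set Implicit Arguments. Unset Strict Implicit. Unset Printing Implicit Defensive.
Import Order.TTheory GRing.Theory Num.Theory.
Local Open Scope ring_scope.

(* Coordinates of a tuple (X, Z, V_1..V_d, W_1..W_d):
   inl (inl (i,j)) = X_ij, inl (inr (i,j)) = Z_ij,
   inr (inl (a,j)) = V_{a,j}, inr (inr (a,k)) = W_{a,k}.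
   Greek indices 1..d are encoded as 'I_d (order preserved). *)
Definition coord (n d : nat) : finType :=
  ((('I_n * 'I_n) + ('I_n * 'I_n)) + (('I_d * 'I_n) + ('I_d * 'I_n)))%type.

Section Mats.
Variables (A : comNzRingType) (n d : nat).
Definition Xm (pt : coord n d -> A) : 'M[A]_n := \matrix_(i, j) pt (inl (inl (i, j))).
Definition Zm (pt : coord n d -> A) : 'M[A]_n := \matrix_(i, j) pt (inl (inr (i, j))).
Definition Vm (pt : coord n d -> A) (a : 'I_d) : 'rV[A]_n := \row_j pt (inr (inl (a, j))).
Definition Wm (pt : coord n d -> A) (a : 'I_d) : 'cV[A]_n := \col_k pt (inr (inr (a, k))).

Definition prodWV (V : 'I_d -> 'rV[A]_n) (W : 'I_d -> 'cV[A]_n) : 'M[A]_n :=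
  foldl (fun acc a => (1%:M + W a *m V a) *m acc) 1%:M (enum 'I_d).

Definition Smat (Z : 'M[A]_n) (V : 'I_d -> 'rV[A]_n) (W : 'I_d -> 'cV[A]_n) : 'M[A]_n :=
  prodWV V W *m Z.

Definition mpow (M : 'M[A]_n) (k : nat) : 'M[A]_n := iter k (mulmx M) 1%:M.

Definition trZpow (mu : A) (k : nat) (pt : coord n d -> A) : A :=
  \tr (mpow (Zm pt + mu *: Smat (Zm pt) (Vm pt) (Wm pt)) k).

Definition pt_of (X Z : 'M[A]_n) (V : 'I_d -> 'rV[A]_n) (W : 'I_d -> 'cV[A]_n)
  : coord n d -> A :=
  fun c => match c with
  | inl (inl (i, j)) => X i j
  | inl (inr (i, j)) => Z i j
  | inr (inl (a, j)) => V a 0 j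
  | inr (inr (a, k)) => W a k 0
  end.
End Mats.

Section Bracket.
Variables (R : numClosedFieldType) (n d : nat).

Definition dl (i j : 'I_n) : R := (i == j)%:R.
Definition ord_o (a b : 'I_d) : R := if a == b then 0 else if (a < b)%N then 1 else -1.
Definition half : R := 2^-1.

(* Van den Bergh's quasi-Poisson bracket on coordinate functions,
   evaluated at the point p *)
Definition br (p : coord n d -> R) (c c' : coord n d) : R :=
  let X := Xm p in let Z := Zm p in let V := Vm p in let W := Wm p in
  let bUU (U : 'M[R]_n) i j k l :=
      half * ((Z *m X) k j * dl i l + dl k j * (X *m Z) i l + Z k j * X i l - X k j * Z i l) in
  let bUW (U : 'M[R]_n) i j a k := half * (dl k j * (U *m W a) i 0 - U k j * W a i 0) in
  let bUV (U : 'M[R]_n) i j a l := half * ((V a *m U) 0 j * dl i l - V a 0 j * U i l) in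
  let bVW a j b k := (if a == b then dl k j + half * (W a k 0 * V a 0 j)
                                     + half * (dl k j * (V a *m W a) 0 0) else 0)
                     + half * ord_o a b * (dl k j * (V a *m W b) 0 0 + W b k 0 * V a 0 j) in
  match c, c' with
  | inl (inl (i, j)), inl (inl (k, l)) =>
      half * (dl i l * (X *m X) k j - dl k j * (X *m X) i l)
  | inl (inr (i, j)), inl (inr (k, l)) =>
      half * (dl k j * (Z *m Z) i l - dl i l * (Z *m Z) k j)
  | inl (inl (i, j)), inl (inr (k, l)) => bUU X i j k l
  | inl (inr (k, l)), inl (inl (i, j)) => - bUU X i j k l
  | inl (inl (i, j)), inr (inr (a, k)) => bUW X i j a k
  | inl (inr (i, j)), inr (inr (a, k)) => bUW Z i j a k
  | inr (inr (a, k)), inl (inl (i, j)) => - bUW X i j a k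
  | inr (inr (a, k)), inl (inr (i, j)) => - bUW Z i j a k
  | inl (inl (i, j)), inr (inl (a, l)) => bUV X i j a l
  | inl (inr (i, j)), inr (inl (a, l)) => bUV Z i j a l
  | inr (inl (a, l)), inl (inl (i, j)) => - bUV X i j a l
  | inr (inl (a, l)), inl (inr (i, j)) => - bUV Z i j a l
  | inr (inl (a, j)), inr (inl (b, l)) =>
      half * ord_o b a * (V b 0 j * V a 0 l + V a 0 j * V b 0 l)
  | inr (inr (a, i)), inr (inr (b, k)) =>
      half * ord_o b a * (W b k 0 * W a i 0 + W a k 0 * W b i 0)
  | inr (inl (a, j)), inr (inr (b, k)) => bVW a j b k
  | inr (inr (b, k)), inr (inl (a, j)) => - bVW a j b k
  end.

(* formal partial derivative at p of a polynomial function f (given over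
   any commutative ring, here instantiated at {poly R}):
   coefficient of 'X in f(p + 'X e_c) *)
Definition pdiff (f : (coord n d -> {poly R}) -> {poly R}) (p : coord n d -> R)
  (c : coord n d) : R :=
  (f (fun c' => (p c')%:P + (if c' == c then 'X else 0)))`_1.

Definition PB (f g : (coord n d -> {poly R}) -> {poly R}) (p : coord n d -> R) : R :=
  \sum_(c : coord n d) \sum_(c' : coord n d) pdiff f p c * pdiff g p c' * br p c c'.

Definition prodInv (V : 'I_d -> 'rV[R]_n) (W : 'I_d -> 'cV[R]_n) : 'M[R]_n :=
  foldr (fun a acc => invmx (1%:M + W a *m V a) *m acc) 1%:M (enum 'I_d).

Definition inMx (q : R) (X Z : 'M[R]_n) (V : 'I_d -> 'rV[R]_n) (W : 'I_d -> 'cV[R]_n) : Prop :=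
  [/\ X \in unitmx, Z \in unitmx, (forall a, (1%:M + W a *m V a) \in unitmx)
    & X *m Z *m invmx X *m invmx Z *m prodInv V W = q%:M].
End Bracket.

Definition not_root_of_unity (R : numClosedFieldType) (q : R) : Prop :=
  forall m : nat, (0 < m)%N -> q ^+ m != 1.

(* By the Leibniz rule, {tr Z_mu^k, tr Z_eta^l} = k l {tr (A Z_mu), tr (B Z_eta)} with
   the coefficients A = Z_mu^(k-1), B = Z_eta^(l-1) frozen.  Write Z_mu = (1 + mu P) Z
   with P = K_d ... K_1 and K_a = 1 + W_a V_a.  The brackets of traces against Z, and
   against K_a, with tr (B' K_b) for b < a are multiples of tr ([A', X] [B', K_b])
   (X = Z, resp. X = K_a); as [B', -] is a derivation this passes to P, and the diagonal
   brackets {K_a, K_a} assemble into {P, P} because the signs o(a,b) follow the order of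
   the factors.  Altogether the bracket is k l / 2 times
     tr (A Q Z Z B) - tr (A Q Z B Z) + tr (A Z B S Z) - tr (A B S Z Z),
   Q = 1 + mu P, S = 1 + eta P, which vanishes: A commutes with Q Z and B with S Z,
   and (eta - mu) Z = eta Q Z - mu S Z (for mu = eta, A and B commute). *)

From Pilot Require Import Defs.
From HB Require Import structures.
From mathcomp Require Import all_boot all_order all_algebra.
From mathcomp Require Import ring.
Set Implicit Arguments. Unset Strict Implicit. Unset Printing Implicit Defensive.
Import Order.TTheory GRing.Theory Num.Theory.
Local Open Scope ring_scope.
(* [all_algebra] shadows [Defs.coord] with [vector.coord]. *)
Import Defs.

Ltac leftmost t := lazymatch t with | (?x *m _)%R => leftmost x | _ => t end.

(* Rotate every trace [\tr (X *m Y)] of the goal until its leftmost factor is [a]. *)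
Ltac rot_to a := repeat match goal with |- context [\tr (?X *m ?Y)] =>
  let h := leftmost X in tryif constr_eq h a then fail else
  (rewrite (mxtrace_mulC X Y) ?mulmxA) end.

Ltac expand_tr := repeat progress rewrite ?mulmxDl ?mulmxDr ?mulmxBl ?mulmxBr
  ?mulmx1 ?mul1mx -?scalemxAl -?scalemxAr ?mulmxN ?mulNmx ?raddfD ?raddfB ?raddfN
  ?mxtraceZ ?mulmxA /=.

(* Turn both sides of an equation between nested sums over the same index types into
   single sums, level by level, leaving the equality of the summands. *)
Ltac merge_sums :=
  repeat (repeat progress rewrite ?mulrDr ?mulrDl ?opprD -?sumrN -?sumrB -?big_split
            ?mulr_sumr ?mulr_suml /=;
          apply: eq_bigr => ? _).

Section MatrixAlgebra.
Variables (R : comNzRingType) (n : nat).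

Lemma mpow_comm (M G : 'M[R]_n) k : G *m M = M *m G -> G *m mpow M k = mpow M k *m G.
Proof.
move=> GM; elim: k => [|k IHk] /=; first by rewrite mulmx1 mul1mx.
by rewrite mulmxA GM -mulmxA IHk mulmxA.
Qed.

Lemma sum_mul_delta (I : finType) (F : I -> R) i0 : \sum_i F i * (i == i0)%:R = F i0.
Proof. by rewrite (bigD1 i0) //= eqxx mulr1 big1 ?addr0 // => i /negPf ->; rewrite mulr0. Qed.

Lemma sum_pair (I J : finType) (G : I * J -> R) : \sum_u G u = \sum_i \sum_j G (i, j).
Proof. by rewrite pair_bigA; apply: eq_bigr => -[]. Qed.

Lemma mxEB m1 m2 (A B : 'M[R]_(m1, m2)) i j : (A - B) i j = A i j - B i j.
Proof. by rewrite !mxE. Qed.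

Lemma tr_mul_rank1 (A : 'M[R]_n) (u : 'cV_n) (v : 'rV_n) :
  \tr (A *m (u *m v)) = (v *m A *m u) 0 0.
Proof. by rewrite mulmxA mxtrace_mulC mulmxA /mxtrace big_ord1. Qed.

Lemma tr_rank2 (A B : 'M[R]_n) (u1 u2 : 'cV_n) (v1 v2 : 'rV_n) :
  \tr (A *m u1 *m v1 *m B *m u2 *m v2) = (v1 *m B *m u2) 0 0 * (v2 *m A *m u1) 0 0.
Proof.
have -> : A *m u1 *m v1 *m B *m u2 *m v2 = A *m u1 *m (v1 *m B *m u2) *m v2.
  by rewrite !mulmxA.
rewrite {1}(mx11_scalar (v1 *m B *m u2)) mul_mx_scalar -scalemxAl mxtraceZ.
by rewrite mxtrace_mulC /mxtrace big_ord1 mulmxA.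
Qed.

Lemma tr_rank2_id (A : 'M[R]_n) (u1 u2 : 'cV_n) (v1 v2 : 'rV_n) :
  \tr (A *m u1 *m v1 *m u2 *m v2) = (v1 *m u2) 0 0 * (v2 *m A *m u1) 0 0.
Proof. by rewrite -[A *m u1 *m v1]mulmx1 tr_rank2 mulmx1. Qed.

Lemma commr_1Drank1 (be : 'M[R]_n) (w : 'cV_n) (v : 'rV_n) :
  be *m (1%:M + w *m v) - (1%:M + w *m v) *m be = be *m w *m v - w *m (v *m be).
Proof. by rewrite mulmxDr mulmxDl mulmx1 mul1mx opprD addrACA subrr add0r !mulmxA. Qed.

Lemma tr_mul_commr_1Drank1 (X be : 'M[R]_n) (w : 'cV_n) (v : 'rV_n) :
  \tr (X *m (be *m (1%:M + w *m v) - (1%:M + w *m v) *m be)) =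
  (v *m X *m be *m w) 0 0 - (v *m be *m X *m w) 0 0.
Proof. by rewrite commr_1Drank1 mulmxBr raddfB /= !tr_mul_rank1 !mulmxA. Qed.

Lemma tr_commr_1Drank1 (al be : 'M[R]_n) (w w' : 'cV_n) (v v' : 'rV_n) :
  \tr ((al *m (1%:M + w *m v) - (1%:M + w *m v) *m al) *m
       (be *m (1%:M + w' *m v') - (1%:M + w' *m v') *m be)) =
  (v *m be *m w') 0 0 * (v' *m al *m w) 0 0 - (v *m w') 0 0 * (v' *m be *m al *m w) 0 0
  - (v' *m w) 0 0 * (v *m al *m be *m w') 0 0 + (v' *m be *m w) 0 0 * (v *m al *m w') 0 0.
Proof.
rewrite !commr_1Drank1 mulmxBl !mulmxBr !raddfB /= !mulmxA tr_rank2.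
rewrite [\tr (al *m _ *m _ *m _ *m _ *m be)]mxtrace_mulC !mulmxA tr_rank2_id.
rewrite [\tr (w *m _ *m _ *m _ *m _ *m be)]mxtrace_mulC !mulmxA tr_rank2.
have -> : w *m v *m al *m be *m w' *m v' = 1%:M *m w *m v *m (al *m be) *m w' *m v'.
  by rewrite mul1mx !mulmxA.
rewrite tr_rank2 mulmx1 !mulmxA.
ring.
Qed.

Lemma rank1_update_sqr (w : 'cV[R]_n) (v : 'rV_n) :
  (1%:M + w *m v) *m (1%:M + w *m v) = 1%:M + (2%:R + (v *m w) 0 0) *: (w *m v).
Proof.
have wvwv : w *m v *m (w *m v) = (v *m w) 0 0 *: (w *m v).
  by rewrite mulmxA -(mulmxA w) {1}(mx11_scalar (v *m w)) mul_mx_scalar -scalemxAl.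
by rewrite mulmxDl !mulmxDr !mulmx1 !mul1mx wvwv scalerDl scaler_nat mulr2n !addrA.
Qed.

Lemma tr_mul4E (al be a b : 'M[R]_n) :
  \tr (al *m b *m be *m a) = \sum_i \sum_j \sum_k \sum_l al j i * be l k * (a k j * b i l).
Proof.
apply/esym; rewrite exchange_big /mxtrace; apply: eq_bigr => j _; rewrite mxE.
rewrite exchange_big; apply: eq_bigr => k _; rewrite mxE mulr_suml.
rewrite exchange_big; apply: eq_bigr => l _; rewrite mxE !mulr_suml.
by apply: eq_bigr => i _; ring.
Qed.

Lemma entry_mul4E_2 (al : 'M[R]_n) (r : 'rV_n) (s : 'M_n) (x : 'cV_n) :
  (r *m al *m s *m x) 0 0 = \sum_i \sum_j \sum_l al j i * x l 0 * (r 0 j * s i l).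
Proof.
apply/esym; under eq_bigr do rewrite exchange_big.
rewrite exchange_big mxE; apply: eq_bigr => l _; rewrite mxE mulr_suml.
apply: eq_bigr => i _; rewrite mxE !mulr_suml; apply: eq_bigr => j _; ring.
Qed.

Lemma entry_mul4E_3 (al : 'M[R]_n) (y : 'rV_n) (t : 'M_n) (u : 'cV_n) :
  (y *m t *m al *m u) 0 0 = \sum_i \sum_j \sum_k al j i * y 0 k * (t k j * u i 0).
Proof.
rewrite mxE; apply: eq_bigr => i _; rewrite mxE mulr_suml.
apply: eq_bigr => j _; rewrite mxE !mulr_suml; apply: eq_bigr => k _; ring.
Qed.

Lemma entry_mul2E (v v' : 'rV[R]_n) (u u' : 'cV_n) :
  (v *m u) 0 0 * (v' *m u') 0 0 = \sum_j \sum_l v 0 j * u j 0 * (v' 0 l * u' l 0).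
Proof. by rewrite !mxE big_distrlr. Qed.

Lemma tr_fusion (h : R) (K L al be : 'M[R]_n) :
  h * (\tr (L *m al *m (K *m K) *m (L *m be)) - \tr (L *m al *m (L *m be) *m (K *m K)))
  + h * \tr ((L *m al *m K - K *m (L *m al)) *m (be *m K *m L - L *m (be *m K)))
  - h * \tr ((L *m be *m K - K *m (L *m be)) *m (al *m K *m L - L *m (al *m K)))
  + h * (\tr (al *m K *m (L *m L) *m (be *m K)) - \tr (al *m K *m (be *m K) *m (L *m L)))
  = h * (\tr (al *m (K *m L *m (K *m L)) *m be) - \tr (al *m be *m (K *m L *m (K *m L)))).
Proof. by rewrite !mulmxBl !mulmxBr !raddfB /= !mulmxA; rot_to al; ring. Qed.

End MatrixAlgebra.

Section TraceDefect.
Variables (R : comNzRingType) (n : nat).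
Implicit Types (A B Z M N P : 'M[R]_n).

Definition tr_defect A B Z M N : R :=
  \tr (A *m M *m Z *m B) - \tr (A *m M *m B *m Z) + \tr (A *m Z *m B *m N)
  - \tr (A *m B *m N *m Z).

Lemma tr_defect_diag A B Z M :
  A *m M = M *m A -> B *m M = M *m B -> A *m B = B *m A -> tr_defect A B Z M M = 0.
Proof.
move=> AM BM AB.
have sAB X : X *m B *m A = X *m A *m B by rewrite -!mulmxA AB.
have sAM X : X *m M *m A = X *m A *m M by rewrite -!mulmxA AM.
have sBM X : X *m M *m B = X *m B *m M by rewrite -!mulmxA BM.
by rewrite /tr_defect; rot_to Z; rewrite ?sAB ?sAM ?sBM ?sAB ?sAM ?sBM ?sAB; ring.
Qed.

Lemma tr_defect_commute A B Z Q S :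
  Q *m S = S *m Q -> A *m Q *m Z = Q *m Z *m A -> B *m S *m Z = S *m Z *m B ->
  \tr (A *m Q *m (Z *m Z) *m (B *m S)) - \tr (A *m Q *m (B *m S) *m (Z *m Z))
  - \tr ((A *m Q *m Z - Z *m (A *m Q)) *m (Z *m B *m S - S *m (Z *m B)))
  + \tr ((B *m S *m Z - Z *m (B *m S)) *m (Z *m A *m Q - Q *m (Z *m A)))
  + \tr (Z *m A *m ((Q - 1%:M) *m (S - 1%:M)) *m (Z *m B))
  - \tr (Z *m A *m (Z *m B) *m ((Q - 1%:M) *m (S - 1%:M)))
  = tr_defect A B Z (Q *m Z) (S *m Z).
Proof.
move=> QS AQZ BSZ; have sQS X : X *m S *m Q = X *m Q *m S by rewrite -!mulmxA QS.
rewrite /tr_defect; do 2 rewrite ?mulmxBr ?mulmxBl ?mulmx1 ?mul1mx ?mulmxA ?raddfB /=.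
rot_to A; rewrite AQZ ?mulmxA; rot_to A.
rot_to B; rewrite BSZ ?mulmxA; rot_to A.
by rewrite !sQS; ring.
Qed.

Lemma bracket_terms_defect (h mu nu : R) A B Z P :
  let Q := 1%:M + mu *: P in let S := 1%:M + nu *: P in
  A *m Q *m Z = Q *m Z *m A -> B *m S *m Z = S *m Z *m B ->
  let x := A + mu *: (A *m P) in let y := B + nu *: (B *m P) in
  h * (\tr (x *m (Z *m Z) *m y) - \tr (x *m y *m (Z *m Z)))
  + nu * (- h * \tr ((x *m Z - Z *m x) *m (Z *m B *m P - P *m (Z *m B))))
  + mu * - (- h * \tr ((y *m Z - Z *m y) *m (Z *m A *m P - P *m (Z *m A))))
  + mu * nu * (h * (\tr (Z *m A *m (P *m P) *m (Z *m B)) - \tr (Z *m A *m (Z *m B) *m (P *m P))))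
  = h * tr_defect A B Z (Q *m Z) (S *m Z).
Proof.
move=> Q S AQZ BSZ x y.
have QS : Q *m S = S *m Q.
  by rewrite /Q /S !mulmxDl !mulmxDr !mul1mx !mulmx1 -!scalemxAl -!scalemxAr !scalerA mulrC addrACA.
rewrite -tr_defect_commute //.
have -> : x = A *m Q by rewrite /x mulmxDr mulmx1 scalemxAr.
have -> : y = B *m S by rewrite /y mulmxDr mulmx1 scalemxAr.
have -> : (Q - 1%:M) *m (S - 1%:M) = (mu * nu) *: (P *m P).
  by rewrite /Q /S ![1%:M + _ *: P]addrC !addrK -scalemxAl -scalemxAr scalerA.
have commr_1DZ (c : R) (Y : 'M_n) :
    Y *m (1%:M + c *: P) - (1%:M + c *: P) *m Y = c *: (Y *m P - P *m Y).
  by rewrite mulmxDr mulmxDl mulmx1 mul1mx -scalemxAr -scalemxAl scalerBr opprD addrACA subrr add0r.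
by rewrite !commr_1DZ -!scalemxAr -!scalemxAl !mxtraceZ; ring.
Qed.

End TraceDefect.

Section TraceDefectVanishes.
Variables (R : idomainType) (n : nat).
Implicit Types (A B Z M N : 'M[R]_n).

Lemma tr_defect_lincomb A B Z M N (mu nu : R) :
  A *m M = M *m A -> B *m N = N *m B -> (nu - mu) *: Z = nu *: M - mu *: N -> mu != nu ->
  tr_defect A B Z M N = 0.
Proof.
move=> AM BN ZMN neq_mu_nu.
suff : (nu - mu) * tr_defect A B Z M N = 0.
  by move/eqP; rewrite mulf_eq0 subr_eq0 eq_sym (negPf neq_mu_nu) => /eqP.
have -> : (nu - mu) * tr_defect A B Z M N = tr_defect A B ((nu - mu) *: Z) M N.
  by rewrite /tr_defect; expand_tr; ring.
rewrite ZMN /tr_defect; expand_tr.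
do 2 (repeat (rot_to A; rewrite AM ?mulmxA); repeat (rot_to B; rewrite BN ?mulmxA)).
by rot_to A; ring.
Qed.

End TraceDefectVanishes.

(* Matrices over [{poly R}] are used as dual numbers: [mxcoef 1] is the tangent part. *)
Section DualNumbers.
Variable R : comNzRingType.

Definition mxcoef i m1 m2 (A : 'M[{poly R}]_(m1, m2)) : 'M[R]_(m1, m2) :=
  map_mx (coefp i) A.

Lemma mxcoefD i m1 m2 (A B : 'M[{poly R}]_(m1, m2)) :
  mxcoef i (A + B) = mxcoef i A + mxcoef i B.
Proof. exact: map_mxD. Qed.

Lemma mxcoefZ i m1 m2 (a : R) (A : 'M[{poly R}]_(m1, m2)) :
  mxcoef i (a%:P *: A) = a *: mxcoef i A.
Proof. by apply/matrixP => r s; rewrite !mxE /= coefCM. Qed.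

Lemma mxcoef0M m1 m2 m3 (A : 'M[{poly R}]_(m1, m2)) (B : 'M_(m2, m3)) :
  mxcoef 0 (A *m B) = mxcoef 0 A *m mxcoef 0 B.
Proof. exact: map_mxM. Qed.

Lemma mxcoef1M m1 m2 m3 (A : 'M[{poly R}]_(m1, m2)) (B : 'M_(m2, m3)) :
  mxcoef 1 (A *m B) = mxcoef 0 A *m mxcoef 1 B + mxcoef 1 A *m mxcoef 0 B.
Proof.
apply/matrixP => r s; rewrite !mxE /= coef_sum -big_split; apply: eq_bigr => t _.
by rewrite coefM big_ord_recr big_ord1 !mxE.
Qed.

Lemma mxcoef0_1 m : mxcoef 0 (1%:M : 'M[{poly R}]_m) = 1%:M.
Proof. exact: map_mx1. Qed.

Lemma mxcoef1_1 m : mxcoef 1 (1%:M : 'M[{poly R}]_m) = 0.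
Proof. by apply/matrixP => r s; rewrite !mxE /= coefMn coef1 mul0rn. Qed.

Lemma mxcoef0_mpow m (M : 'M[{poly R}]_m) k : mxcoef 0 (mpow M k) = mpow (mxcoef 0 M) k.
Proof. by elim: k => [|k IHk] /=; rewrite ?mxcoef0_1 // mxcoef0M IHk. Qed.

Lemma tr_mxcoef1 m (A : 'M[{poly R}]_m) : \tr (mxcoef 1 A) = (\tr A)`_1.
Proof. by rewrite /mxtrace coef_sum; apply: eq_bigr => i _; rewrite mxE. Qed.

Lemma tr_mxcoef1_mpow m (M : 'M[{poly R}]_m) k (G : 'M[R]_m) :
  G *m mxcoef 0 M = mxcoef 0 M *m G ->
  \tr (G *m mxcoef 1 (mpow M k)) = k%:R * \tr (G *m mpow (mxcoef 0 M) k.-1 *m mxcoef 1 M).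
Proof.
elim: k G => [|k IHk] G GM /=; first by rewrite mxcoef1_1 mulmx0 mxtrace0 mul0r.
rewrite mxcoef1M mxcoef0_mpow mulmxDr mxtraceD mulmxA IHk; last first.
  by rewrite {1}GM -mulmxA.
have -> : \tr (G *m (mxcoef 1 M *m mpow (mxcoef 0 M) k))
          = \tr (G *m mpow (mxcoef 0 M) k *m mxcoef 1 M).
  by rewrite mulmxA mxtrace_mulC mulmxA -(mpow_comm k GM).
case: k {IHk} => [|k] /=; first by rewrite mul0r add0r mul1r.
by rewrite -(mulmxA G) [in RHS]mulrSr mulrDl mul1r.
Qed.

End DualNumbers.

Section Coordinates.
Variables (R : comNzRingType) (n d : nat).
Implicit Types (p : coord n d -> R) (c : coord n d) (a : 'I_d) (s : seq 'I_d).

Definition Kmx (A : comNzRingType) (pt : coord n d -> A) a : 'M[A]_n :=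
  1%:M + Wm pt a *m Vm pt a.

Definition Kprod (A : comNzRingType) (pt : coord n d -> A) s : 'M[A]_n :=
  foldl (fun acc a => Kmx pt a *m acc) 1%:M s.

Lemma Kprod_rcons (A : comNzRingType) (pt : coord n d -> A) s a :
  Kprod pt (rcons s a) = Kmx pt a *m Kprod pt s.
Proof. by rewrite /Kprod foldl_rcons. Qed.

Definition shift_pt p c : coord n d -> {poly R} :=
  fun c' => (p c')%:P + (if c' == c then 'X else 0).

Lemma coef0_shift_pt p c c' : (shift_pt p c c')`_0 = p c'.
Proof. by rewrite coefD coefC /=; case: eqP; rewrite ?coefX ?coef0 addr0. Qed.

Lemma coef1_shift_pt p c c' : (shift_pt p c c')`_1 = (c' == c)%:R.
Proof. by rewrite coefD coefC /=; case: eqP; rewrite ?coefX ?coef0 add0r. Qed.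

Definition dZm c : 'M[R]_n := \matrix_(i, j) (inl (inr (i, j)) == c)%:R.
Definition dVm a c : 'rV[R]_n := \row_j (inr (inl (a, j)) == c)%:R.
Definition dWm a c : 'cV[R]_n := \col_k (inr (inr (a, k)) == c)%:R.
Definition dKmx p a c : 'M[R]_n := dWm a c *m Vm p a + Wm p a *m dVm a c.

Lemma mxcoef0_Zm p c : mxcoef 0 (Zm (shift_pt p c)) = Zm p.
Proof. by apply/matrixP => i j; rewrite !mxE /= coef0_shift_pt. Qed.
Lemma mxcoef1_Zm p c : mxcoef 1 (Zm (shift_pt p c)) = dZm c.
Proof. by apply/matrixP => i j; rewrite !mxE /= coef1_shift_pt. Qed.
Lemma mxcoef0_Vm p c a : mxcoef 0 (Vm (shift_pt p c) a) = Vm p a.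
Proof. by apply/matrixP => i j; rewrite !mxE /= coef0_shift_pt. Qed.
Lemma mxcoef1_Vm p c a : mxcoef 1 (Vm (shift_pt p c) a) = dVm a c.
Proof. by apply/matrixP => i j; rewrite !mxE /= coef1_shift_pt. Qed.
Lemma mxcoef0_Wm p c a : mxcoef 0 (Wm (shift_pt p c) a) = Wm p a.
Proof. by apply/matrixP => i j; rewrite !mxE /= coef0_shift_pt. Qed.
Lemma mxcoef1_Wm p c a : mxcoef 1 (Wm (shift_pt p c) a) = dWm a c.
Proof. by apply/matrixP => i j; rewrite !mxE /= coef1_shift_pt. Qed.

Lemma mxcoef0_Kmx p c a : mxcoef 0 (Kmx (shift_pt p c) a) = Kmx p a.
Proof. by rewrite mxcoefD mxcoef0_1 mxcoef0M mxcoef0_Vm mxcoef0_Wm. Qed.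

Lemma mxcoef1_Kmx p c a : mxcoef 1 (Kmx (shift_pt p c) a) = dKmx p a c.
Proof.
by rewrite mxcoefD mxcoef1_1 mxcoef1M mxcoef0_Vm mxcoef0_Wm mxcoef1_Vm mxcoef1_Wm add0r addrC.
Qed.

Lemma mxcoef0_Kprod p c s : mxcoef 0 (Kprod (shift_pt p c) s) = Kprod p s.
Proof.
elim/last_ind: s => [|s a IHs]; first exact: mxcoef0_1.
by rewrite !Kprod_rcons mxcoef0M mxcoef0_Kmx IHs.
Qed.

Definition dKprod p s c : 'M[R]_n := mxcoef 1 (Kprod (shift_pt p c) s).

Lemma dKprod_nil p c : dKprod p [::] c = 0.
Proof. exact: mxcoef1_1. Qed.

Lemma dKprod_rcons p s a c :
  dKprod p (rcons s a) c = dKmx p a c *m Kprod p s + Kmx p a *m dKprod p s c.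
Proof.
by rewrite /dKprod Kprod_rcons mxcoef1M mxcoef0_Kmx mxcoef1_Kmx mxcoef0_Kprod addrC.
Qed.

End Coordinates.

Arguments dZm {R n d} c.
Arguments dVm {R n d} a c.
Arguments dWm {R n d} a c.

Section TraceGradient.
Variables (R : numClosedFieldType) (n d : nat).
Implicit Types (p : coord n d -> R) (c : coord n d).

Definition Kall p : 'M[R]_n := Kprod p (enum 'I_d).

Definition Zmu p (mu : R) : 'M[R]_n := Zm p + mu *: (Kall p *m Zm p).

Lemma pdiff_trZpow p (mu : R) k c :
  let A := mpow (Zmu p mu) k.-1 in
  pdiff (trZpow mu%:P k) p c =
  k%:R * (\tr ((A + mu *: (A *m Kall p)) *m dZm c)
          + mu * \tr ((Zm p *m A) *m dKprod p (enum 'I_d) c)).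
Proof.
move=> A; rewrite /pdiff /trZpow -/(shift_pt p c) -tr_mxcoef1 -[mxcoef 1 _]mul1mx.
have mxcoef0_Zmu : mxcoef 0 (Zm (shift_pt p c) + mu%:P *: Smat (Zm (shift_pt p c))
                     (Vm (shift_pt p c)) (Wm (shift_pt p c))) = Zmu p mu.
  by rewrite mxcoefD mxcoefZ mxcoef0M mxcoef0_Zm -[prodWV _ _]/(Kprod _ _) mxcoef0_Kprod.
have mxcoef1_Zmu : mxcoef 1 (Zm (shift_pt p c) + mu%:P *: Smat (Zm (shift_pt p c))
                     (Vm (shift_pt p c)) (Wm (shift_pt p c)))
    = dZm c + mu *: (Kall p *m dZm c + dKprod p (enum 'I_d) c *m Zm p).
  by rewrite mxcoefD mxcoefZ mxcoef1M mxcoef1_Zm mxcoef0_Zm -[prodWV _ _]/(Kprod _ _)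
    mxcoef0_Kprod.
rewrite tr_mxcoef1_mpow mxcoef0_Zmu ?mul1mx ?mulmx1 // mxcoef1_Zmu -/A; congr (_ * _).
rewrite mulmxDr -scalemxAr mulmxDr mulmxDl -scalemxAl !mxtraceD !mxtraceZ mxtraceD mulrDr addrA.
by rewrite !mulmxA [\tr (A *m _ *m Zm p)]mxtrace_mulC mulmxA.
Qed.

End TraceGradient.

Section BracketForms.
Variables (R : numClosedFieldType) (n d : nat).
Implicit Types (p : coord n d -> R) (a b : 'I_d).

Lemma ord_o_id a : ord_o R a a = 0.
Proof. by rewrite /ord_o eqxx. Qed.

Lemma ord_oC a b : ord_o R a b = - ord_o R b a.
Proof.
have [<-|neq_ab] := eqVneq a b; first by rewrite ord_o_id oppr0.
rewrite /ord_o (negPf neq_ab) eq_sym (negPf neq_ab).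
case: ltngtP => [_|_|/val_inj eq_ab]; rewrite ?opprK //.
by rewrite eq_ab eqxx in neq_ab.
Qed.

Lemma br_antisym p c c' : br p c' c = - br p c c'.
Proof.
case: c => [[[i j]|[i j]]|[[a j]|[a j]]]; case: c' => [[[k l]|[k l]]|[[b m]|[b m]]];
  rewrite /br /= ?opprK //; try ring; by rewrite (ord_oC a b); ring.
Qed.

(* The bracket at [p] of two functions with gradients [phi] and [psi] at [p]. *)
Definition brg p (phi psi : coord n d -> R) : R :=
  \sum_c \sum_c' phi c * psi c' * br p c c'.

Lemma brg_antisym p phi psi : brg p psi phi = - brg p phi psi.
Proof.
rewrite /brg exchange_big -sumrN; apply: eq_bigr => c _; rewrite -sumrN.
by apply: eq_bigr => c' _; rewrite (br_antisym p c c'); ring.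
Qed.

Lemma eq_brg p phi phi' psi psi' : phi =1 phi' -> psi =1 psi' ->
  brg p phi psi = brg p phi' psi'.
Proof.
by move=> eq_phi eq_psi; apply: eq_bigr => c _; apply: eq_bigr => c' _; rewrite eq_phi eq_psi.
Qed.

Lemma brgDr p phi psi1 psi2 :
  brg p phi (fun c => psi1 c + psi2 c) = brg p phi psi1 + brg p phi psi2.
Proof.
rewrite /brg -big_split; apply: eq_bigr => c _; rewrite -big_split.
by apply: eq_bigr => c' _; rewrite /= mulrDr mulrDl.
Qed.

Lemma brgDl p phi1 phi2 psi :
  brg p (fun c => phi1 c + phi2 c) psi = brg p phi1 psi + brg p phi2 psi.
Proof. by rewrite brg_antisym brgDr opprD -!brg_antisym. Qed.

Lemma brgZr p x phi psi : brg p phi (fun c => x * psi c) = x * brg p phi psi.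
Proof.
rewrite /brg mulr_sumr; apply: eq_bigr => c _; rewrite mulr_sumr.
by apply: eq_bigr => c' _; ring.
Qed.

Lemma brgZl p x phi psi : brg p (fun c => x * phi c) psi = x * brg p phi psi.
Proof. by rewrite brg_antisym brgZr -mulrN -brg_antisym. Qed.

(* The bracket of [tr (al M1)] and [tr (be M2)] with [al], [be] frozen, where
   [D1], [D2] are the coordinate derivatives of [M1], [M2]. *)
Definition brt p (D1 D2 : coord n d -> 'M[R]_n) (al be : 'M[R]_n) : R :=
  brg p (fun c => \tr (al *m D1 c)) (fun c => \tr (be *m D2 c)).

Lemma brt_antisym p D1 D2 al be : brt p D2 D1 be al = - brt p D1 D2 al be.
Proof. exact: brg_antisym. Qed.

Lemma PB_trZpow p mu eta k l :
  let A := mpow (Zmu p mu) k.-1 in let B := mpow (Zmu p eta) l.-1 in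
  let dK := dKprod p (enum 'I_d) in
  PB (trZpow mu%:P k) (trZpow eta%:P l) p =
  k%:R * l%:R * (brt p dZm dZm (A + mu *: (A *m Kall p)) (B + eta *: (B *m Kall p))
    + eta * brt p dZm dK (A + mu *: (A *m Kall p)) (Zm p *m B)
    + mu * brt p dK dZm (Zm p *m A) (B + eta *: (B *m Kall p))
    + mu * eta * brt p dK dK (Zm p *m A) (Zm p *m B)).
Proof.
move=> A B dK; rewrite /PB -/(brg _ _ _).
rewrite (eq_brg p (fun c => pdiff_trZpow p mu k c) (fun c => pdiff_trZpow p eta l c)).
rewrite brgZl brgZr brgDl !brgDr !brgZl !brgZr /brt; ring.
Qed.

Lemma brg_restrict p phi psi (P1 P2 : pred (coord n d)) :
  (forall c, ~~ P1 c -> phi c = 0) -> (forall c, ~~ P2 c -> psi c = 0) ->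
  brg p phi psi = \sum_(c | P1 c) \sum_(c' | P2 c') phi c * psi c' * br p c c'.
Proof.
move=> phiP1 psiP2; rewrite /brg (bigID P1) /= [X in _ + X]big1 ?addr0 => [|c P1c]; last first.
  by rewrite big1 // => c' _; rewrite phiP1 // !mul0r.
apply: eq_bigr => c _; rewrite (bigID P2) /= [X in _ + X]big1 ?addr0 // => c' P2c'.
by rewrite psiP2 // mulr0 mul0r.
Qed.

Definition isZ (c : coord n d) : bool := if c is inl (inr _) then true else false.

Definition isK b (c : coord n d) : bool :=
  match c with inr (inl (a, _)) | inr (inr (a, _)) => a == b | _ => false end.

Lemma sum_isZ (F : coord n d -> R) :
  \sum_(c | isZ c) F c = \sum_i \sum_j F (inl (inr (i, j))).
Proof.
by rewrite big_mkcond !big_sumType /= !big1_eq add0r !addr0 sum_pair.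
Qed.

Lemma sum_isK b (F : coord n d -> R) :
  \sum_(c | isK b c) F c = \sum_j F (inr (inl (b, j))) + \sum_k F (inr (inr (b, k))).
Proof.
rewrite big_mkcond big_sumType /= !big_sumType /= !big1_eq !add0r !sum_pair /=.
rewrite exchange_big [X in _ + X]exchange_big /=.
by congr (_ + _); apply: eq_bigr => j _; rewrite -big_mkcond big_pred1_eq.
Qed.

End BracketForms.

Arguments isZ {n d}.
Arguments isK {n d}.

Section ElementaryBrackets.
Variables (R : numClosedFieldType) (n d : nat).
Implicit Types (p : coord n d -> R) (a b : 'I_d) (al be : 'M[R]_n).

Lemma eq_coordZ (i j i' j' : 'I_n) :
  (inl (inr (i, j)) == inl (inr (i', j')) :> coord n d) = (i == i') && (j == j').
Proof. by []. Qed.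

Lemma eq_coordV a a' (j j' : 'I_n) :
  (inr (inl (a, j)) == inr (inl (a', j')) :> coord n d) = (a == a') && (j == j').
Proof. by []. Qed.

Lemma eq_coordW a a' (j j' : 'I_n) :
  (inr (inr (a, j)) == inr (inr (a', j')) :> coord n d) = (a == a') && (j == j').
Proof. by []. Qed.

Definition gradZ al (c : coord n d) : R :=
  if c is inl (inr (i, j)) then al j i else 0.

Lemma tr_dZm al c : \tr (al *m dZm c) = gradZ al c.
Proof.
rewrite /mxtrace; under eq_bigr do rewrite mxE.
case: c => [[[i j]|[i j]]|[[a j]|[a j]]] /=;
  try by rewrite big1 // => x _; rewrite big1 // => y _; rewrite mxE mulr0.
rewrite (bigD1 j) //= [X in _ + X]big1 => [|x /negPf neq_xj].
  rewrite addr0 -[RHS](sum_mul_delta (al j)); apply: eq_bigr => y _.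
  by rewrite mxE eq_coordZ eqxx andbT.
by rewrite big1 // => y _; rewrite mxE eq_coordZ neq_xj andbF mulr0.
Qed.

Definition gradK p b al (c : coord n d) : R :=
  match c with
  | inr (inl (a, j)) => if a == b then (al *m Wm p b) j 0 else 0
  | inr (inr (a, k)) => if a == b then (Vm p b *m al) 0 k else 0
  | _ => 0
  end.

Lemma tr_dKmx p b al c : \tr (al *m dKmx p b c) = gradK p b al c.
Proof.
rewrite /dKmx mulmxDr mxtraceD !tr_mul_rank1 -(mulmxA (dVm b c)) !mxE.
case: c => [c|[[a j]|[a j]]] /=.
- by rewrite !big1 ?addr0 // => i _; rewrite !mxE ?mulr0 ?mul0r.
- rewrite [X in X + _]big1 ?add0r => [|i _]; last by rewrite !mxE mulr0.
  have [->|neq_ab] := eqVneq a b; last first.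
    by rewrite big1 // => i _; rewrite !mxE eq_coordV eq_sym (negPf neq_ab) mul0r.
  rewrite -[RHS](sum_mul_delta (fun i => (al *m Wm p b) i 0) j).
  by apply: eq_bigr => i _; rewrite !mxE eq_coordV eqxx mulrC.
- rewrite [X in _ + X]big1 ?addr0 => [|i _]; last by rewrite !mxE mul0r.
  have [->|neq_ab] := eqVneq a b; last first.
    by rewrite big1 // => i _; rewrite !mxE eq_coordW eq_sym (negPf neq_ab) mulr0.
  rewrite -[RHS](sum_mul_delta (fun i => (Vm p b *m al) 0 i) j).
  by apply: eq_bigr => i _; rewrite !mxE eq_coordW eqxx.
Qed.

Lemma brt_ZZ p al be :
  brt p dZm dZm al be =
  half R * (\tr (al *m (Zm p *m Zm p) *m be) - \tr (al *m be *m (Zm p *m Zm p))).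
Proof.
rewrite /brt (eq_brg p (tr_dZm al) (tr_dZm be)).
rewrite (brg_restrict p (P1 := isZ) (P2 := isZ)); try by case=> [[]|].
rewrite sum_isZ; under eq_bigr do under eq_bigr do rewrite sum_isZ.
have -> : al *m be *m (Zm p *m Zm p) = al *m 1%:M *m be *m (Zm p *m Zm p) by rewrite mulmx1.
rewrite -[al *m _ *m be]mulmx1 !tr_mul4E /br /=.
merge_sums; rewrite !mxE /dl; ring.
Qed.

Lemma brt_ZK p b al be :
  brt p dZm (dKmx p b) al be =
  - half R * \tr ((al *m Zm p - Zm p *m al) *m (be *m Kmx p b - Kmx p b *m be)).
Proof.
set V := Vm p b; set W := Wm p b; set Z := Zm p.
have -> : brt p dZm (dKmx p b) al be =
    half R * ((V *m Z *m al *m 1%:M *m (be *m W)) 0 0 - (V *m al *m Z *m (be *m W)) 0 0)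
  + half R * ((V *m be *m 1%:M *m al *m (Z *m W)) 0 0 - (V *m be *m Z *m al *m W) 0 0).
  rewrite /brt (eq_brg p (tr_dZm al) (tr_dKmx p b be)).
  rewrite (brg_restrict p (P1 := isZ) (P2 := isK b)); first last.
  - by case=> [[?|?]|[[??]|[??]]] //= /negPf ->.
  - by case=> [[]|].
  rewrite sum_isZ; under eq_bigr do under eq_bigr do rewrite sum_isK.
  rewrite (entry_mul4E_2 al (V *m Z)) (entry_mul4E_2 al V).
  rewrite (entry_mul4E_3 al (V *m be) 1%:M) (entry_mul4E_3 al (V *m be) Z) /br /= !eqxx.
  merge_sums; rewrite !mxE /dl; ring.
rewrite -mulmxA tr_mul_commr_1Drank1 !mulmxBr !mulmxBl !mxEB.
by rewrite /V /W /Z !mul1mx !mulmxA !mulmx1; ring.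
Qed.

Lemma entry_deltaE_col (v : 'rV[R]_n) (u : 'cV_n) :
  (v *m u) 0 0 = \sum_j \sum_k u j 0 * v 0 k * dl R k j.
Proof.
rewrite mxE; apply: eq_bigr => j _.
rewrite -[RHS]mulr1 -(sum_mul_delta (fun k => v 0 k * u j 0) j) mulr1.
by apply: eq_bigr => k _; rewrite /dl; ring.
Qed.

Lemma entry_deltaE_row (v : 'rV[R]_n) (u : 'cV_n) :
  (v *m u) 0 0 = \sum_k \sum_j v 0 k * u j 0 * dl R k j.
Proof. by rewrite entry_deltaE_col exchange_big; do 2 (apply: eq_bigr => ? _); ring. Qed.

(* The four summands are the V-V, V-W, W-V and W-W blocks of [br]. *)
Lemma brt_KK p a b al be :
  let x := al *m Wm p a in let y := Vm p a *m al in
  let x' := be *m Wm p b in let y' := Vm p b *m be in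
  let e := (a == b)%:R in let h := half R in let o := h * ord_o R b a in
  brt p (dKmx p a) (dKmx p b) al be =
    (o * ((Vm p b *m x) 0 0 * (Vm p a *m x') 0 0 + (Vm p a *m x) 0 0 * (Vm p b *m x') 0 0)
     + (e * ((y' *m x) 0 0 * (1 + h * (Vm p a *m Wm p a) 0 0)
             + h * ((Vm p a *m x) 0 0 * (y' *m Wm p a) 0 0))
        - o * ((Vm p a *m Wm p b) 0 0 * (y' *m x) 0 0
               + (Vm p a *m x) 0 0 * (y' *m Wm p b) 0 0)))
  + (- (e * ((y *m x') 0 0 * (1 + h * (Vm p b *m Wm p b) 0 0)
             + h * ((y *m Wm p b) 0 0 * (Vm p b *m x') 0 0))
        + o * ((Vm p b *m Wm p a) 0 0 * (y *m x') 0 0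
               + (y *m Wm p a) 0 0 * (Vm p b *m x') 0 0))
     + o * ((y *m Wm p a) 0 0 * (y' *m Wm p b) 0 0 + (y *m Wm p b) 0 0 * (y' *m Wm p a) 0 0)).
Proof.
move=> x y x' y' e h o.
rewrite /brt (eq_brg p (tr_dKmx p a al) (tr_dKmx p b be)).
rewrite (brg_restrict p (P1 := isK a) (P2 := isK b));
  try by case=> [[?|?]|[[??]|[??]]] //= /negPf ->.
rewrite sum_isK; under eq_bigr do rewrite sum_isK; under [X in _ + X]eq_bigr do rewrite sum_isK.
rewrite /br /= !eqxx !big_split /=.
rewrite (entry_deltaE_col y' x) (entry_deltaE_row y x').
rewrite (entry_mul2E (Vm p b) (Vm p a) x x') (entry_mul2E (Vm p a) (Vm p b) x x').
rewrite (entry_mul2E (Vm p a) y' x (Wm p a)) (entry_mul2E (Vm p a) y' x (Wm p b)).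
rewrite (entry_mul2E y (Vm p b) (Wm p b) x') (entry_mul2E y (Vm p b) (Wm p a) x').
rewrite (entry_mul2E y y' (Wm p a) (Wm p b)) (entry_mul2E y y' (Wm p b) (Wm p a)).
rewrite /x /y /x' /y' /e /o /h (ord_oC R a b).
rewrite (eq_sym b a); congr ((_ + _) + (_ + _)); merge_sums; case: (a == b) => /=; ring.
Qed.

Lemma brt_KK_diag p a al be :
  brt p (dKmx p a) (dKmx p a) al be =
  half R * (\tr (al *m (Kmx p a *m Kmx p a) *m be) - \tr (al *m be *m (Kmx p a *m Kmx p a))).
Proof.
rewrite brt_KK /= eqxx ord_o_id /Kmx rank1_update_sqr mulmxDr mulmx1 mulmxDl.
rewrite !mulmxDr !mulmx1 !mxtraceD -!scalemxAr -!scalemxAl !mxtraceZ.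
rewrite [\tr (al *m _ *m be)]mxtrace_mulC (mulmxA be) !tr_mul_rank1 !mulmxA.
by rewrite /half /=; field.
Qed.

Lemma brt_KK_lt p a b al be : (b < a)%N ->
  brt p (dKmx p a) (dKmx p b) al be =
  half R * \tr ((al *m Kmx p a - Kmx p a *m al) *m (be *m Kmx p b - Kmx p b *m be)).
Proof.
move=> lt_ba; have neq_ab : (a == b) = false by apply: contraTF lt_ba => /eqP->; rewrite ltnn.
have ord_ba : ord_o R b a = 1 by rewrite /ord_o eq_sym neq_ab lt_ba.
by rewrite brt_KK /= neq_ab ord_ba /= /Kmx tr_commr_1Drank1 !mulmxA; ring.
Qed.

End ElementaryBrackets.

Section ProductRule.
Variables (R : numClosedFieldType) (n d : nat).
Implicit Types (p : coord n d -> R) (a : 'I_d) (s : seq 'I_d) (al be : 'M[R]_n).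

Lemma brt_dKprod_rcons_r p D s a al be :
  brt p D (dKprod p (rcons s a)) al be =
  brt p D (dKmx p a) al (Kprod p s *m be) + brt p D (dKprod p s) al (be *m Kmx p a).
Proof.
rewrite /brt -brgDr; apply: eq_brg => // c.
by rewrite dKprod_rcons mulmxDr mxtraceD mulmxA mxtrace_mulC !mulmxA.
Qed.

Lemma brt_dKprod_rcons_l p D s a al be :
  brt p (dKprod p (rcons s a)) D al be =
  brt p (dKmx p a) D (Kprod p s *m al) be + brt p (dKprod p s) D (al *m Kmx p a) be.
Proof. by rewrite brt_antisym brt_dKprod_rcons_r opprD -!brt_antisym. Qed.

Lemma brt_dKprod_nil p D al be : brt p D (dKprod p [::]) al be = 0.
Proof.
rewrite /brt /brg big1 // => c _; rewrite big1 // => c' _.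
by rewrite dKprod_nil mulmx0 mxtrace0 mulr0 mul0r.
Qed.

(* [be |-> be *m K - K *m be] is a derivation in [K]. *)
Lemma brt_dKprod_comm p D (X : 'M[R]_n) (k : R) s :
  (forall a al be, a \in s ->
     brt p D (dKmx p a) al be = k * \tr ((al *m X - X *m al) *m (be *m Kmx p a - Kmx p a *m be))) ->
  forall al be,
  brt p D (dKprod p s) al be = k * \tr ((al *m X - X *m al) *m (be *m Kprod p s - Kprod p s *m be)).
Proof.
elim/last_ind: s => [|s a IHs] brtK al be.
  by rewrite brt_dKprod_nil mulmx1 mul1mx subrr mulmx0 mxtrace0 mulr0.
rewrite brt_dKprod_rcons_r brtK ?mem_rcons ?mem_head // IHs => [|b al' be' sb].
  rewrite -mulrDr -mxtraceD -mulmxDr Kprod_rcons; congr (_ * \tr (_ *m _)).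
  by rewrite !mulmxA addrC addrA subrK.
by apply: brtK; rewrite mem_rcons in_cons sb orbT.
Qed.

Lemma brt_ZL p s al be :
  brt p dZm (dKprod p s) al be =
  - half R * \tr ((al *m Zm p - Zm p *m al) *m (be *m Kprod p s - Kprod p s *m be)).
Proof. by apply: brt_dKprod_comm => a al' be' _; apply: brt_ZK. Qed.

Lemma brt_KL p a s al be : all (fun b : 'I_d => (b < a)%N) s ->
  brt p (dKmx p a) (dKprod p s) al be =
  half R * \tr ((al *m Kmx p a - Kmx p a *m al) *m (be *m Kprod p s - Kprod p s *m be)).
Proof. by move=> /allP lt_sa; apply: brt_dKprod_comm => b al' be' /lt_sa; apply: brt_KK_lt. Qed.

Lemma brt_LL p s al be : pairwise (fun a b : 'I_d => (a < b)%N) s ->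
  brt p (dKprod p s) (dKprod p s) al be =
  half R * (\tr (al *m (Kprod p s *m Kprod p s) *m be)
            - \tr (al *m be *m (Kprod p s *m Kprod p s))).
Proof.
elim/last_ind: s al be => [|s a IHs] al be.
  by rewrite brt_dKprod_nil /Kprod /= !mulmx1 subrr mulr0.
rewrite pairwise_rcons => /andP[lt_sa sorted_s].
rewrite brt_dKprod_rcons_l !brt_dKprod_rcons_r brt_KK_diag brt_KL // IHs //.
rewrite brt_antisym brt_KL // Kprod_rcons.
by rewrite -(tr_fusion (half R) (Kmx p a) (Kprod p s) al be) addrA.
Qed.

End ProductRule.

Lemma pairwise_ltn_enum d : pairwise (fun a b : 'I_d => (a < b)%N) (enum 'I_d).
Proof.
by have := iota_ltn_sorted 0 d; rewrite -val_enum_ord (sorted_pairwise ltn_trans) pairwise_map.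
Qed.

Lemma PB_trZpow_eq0 (R : numClosedFieldType) n d (p : coord n d -> R) (mu eta : R) k l :
  PB (trZpow mu%:P k) (trZpow eta%:P l) p = 0.
Proof.
rewrite PB_trZpow /=.
set A := mpow (Zmu p mu) k.-1; set B := mpow (Zmu p eta) l.-1.
rewrite brt_ZZ brt_ZL (brt_antisym p dZm) brt_ZL brt_LL ?pairwise_ltn_enum // -/(Kall p).
have ZmuE c : Zmu p c = (1%:M + c *: Kall p) *m Zm p.
  by rewrite /Zmu mulmxDl mul1mx -scalemxAl.
have AZmu : A *m Zmu p mu = Zmu p mu *m A by rewrite mpow_comm.
have BZmu : B *m Zmu p eta = Zmu p eta *m B by rewrite mpow_comm.
rewrite bracket_terms_defect -?ZmuE;
  [|by rewrite -mulmxA -ZmuE AZmu|by rewrite -mulmxA -ZmuE BZmu].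
have [eq_mu_eta|neq_mu_eta] := eqVneq mu eta.
  by subst eta; rewrite tr_defect_diag ?mulr0 // /A (mpow_comm _ BZmu).
rewrite (tr_defect_lincomb AZmu BZmu _ neq_mu_eta) ?mulr0 // !ZmuE.
by rewrite !mulmxDl !mul1mx -!scalemxAl !scalerDr !scalerA mulrC scalerBl opprD addrACA subrr addr0.
Qed.

(* The bracket vanishes at every point of the coordinate space. *)
Theorem mainTheorem17 (R : numClosedFieldType) (n d : nat) (q : R)
  (hn : (0 < n)%N) (hd : (0 < d)%N) (hq0 : q != 0) (hq : not_root_of_unity q)
  (X Z : 'M[R]_n) (V : 'I_d -> 'rV[R]_n) (W : 'I_d -> 'cV[R]_n) :
  inMx q X Z V W ->
  forall (mu eta : R) (k l : nat),
    PB (trZpow mu%:P k) (trZpow eta%:P l) (pt_of X Z V W) = 0.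
Proof. by move=> _ mu eta k l; apply: PB_trZpow_eq0. Qed.
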